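(* Let $2\le y\le x$ and let $k\ge0$ be an integer. For $i\ge0$ define $$S_i(x,y)=\{n\le x:\ \text{there is a prime } p>y \text{ with } p^2\mid\phi_i(n)\}.$$ Then $$\left|\Psi(x,P_k)-\Phi_k(x,y)\right|\le\sum_{i=0}^{k-1}|S_i(x,y)|.$$
   Context: $\phi$ is Euler's function, $\phi_0(n)=n$, $\phi_{i+1}(n)=\phi(\phi_i(n))$. $\Phi_k(x,y)=\#\{n\le x:\ p\mid\phi_k(n)\Rightarrow p\le y\}$ ($p$ prime). For a set $P$ of primes, $\Psi(x,P)=\#\{n\le x:\ p\mid n\Rightarrow p\in P\}$. The sets of primes $P_k$ are defined by $P_0=\{p\le y\}$ and $P_{k+1}=\{q\le x\text{ prime}:\ p\mid q-1\Rightarrow p\in P_k\}$. *)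

From HB Require Import structures.
From mathcomp Require Import all_boot all_order all_algebra.
From mathcomp Require Import reals.
Set Implicit Arguments. Unset Strict Implicit. Unset Printing Implicit Defensive.
Import Order.TTheory GRing.Theory Num.Theory.
Local Open Scope ring_scope.

Definition phi_iter (i n : nat) : nat := iter i totient n.

Section Counting.
Variable R : realType.

(* #{ n : 1 <= n <= x, P n }  (n ranges over positive integers n <= x;
   the ordinal bound truncn x + 1 only serves to make the range finite). *)
Definition count_le (x : R) (P : pred nat) : nat :=
  #|[set n : 'I_(Num.truncn x).+1 | [&& (0 < n)%N, (n%:R <= x) & P n]]|.

Fixpoint Pset (x y : R) (k : nat) : pred nat :=
  match k with
  | 0 => fun p => prime p && (p%:R <= y)
  | k'.+1 => fun q => [&& prime q, q%:R <= x & all (Pset x y k') (primes q.-1)]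
  end.

Definition Psi (x : R) (P : pred nat) : nat :=
  count_le x (fun n => all P (primes n)).

Definition PhiK (k : nat) (x y : R) : nat :=
  count_le x (fun n => all (fun p => p%:R <= y) (primes (phi_iter k n))).

Definition S_card (i : nat) (x y : R) : nat :=
  count_le x (fun n => has (fun p => (y < p%:R) && (p ^ 2 %| phi_iter i n)%N)
                           (primes (phi_iter i n))).
End Counting.

(* The primes of phi(m) are the primes dividing p - 1 for some prime p | m,
   together with the primes p with p^2 | m.  If m <= x has no square factor p^2
   with p > y, the latter primes are <= y and hence lie in every P_j (as y <= x),
   so m is P_{j+1}-smooth iff phi(m) is P_j-smooth.  Iterating along
   n, phi(n), ..., phi_{k-1}(n), an n outside every S_i(x,y), i < k, is
   P_k-smooth iff phi_k(n) is y-smooth; the two counts can thus only differ on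
   the union of these S_i(x,y). *)

From HB Require Import structures.
From mathcomp Require Import all_boot all_order all_algebra.
From mathcomp Require Import reals.
From mathcomp Require Import zify.
Import Order.TTheory GRing.Theory Num.Theory.

Lemma leq_totient n : (totient n <= n)%N.
Proof.
rewrite totient_count_coprime.
apply: (@leq_trans (\sum_(0 <= d < n) 1)); first by apply: leq_sum => d _; apply: leq_b1.
by rewrite sum_nat_const_nat subn0 muln1.
Qed.

Lemma dvdn_pred_totient {p m : nat} : p \in primes m -> (p.-1 %| totient m)%N.
Proof.
move=> pm; have m_gt0 : (0 < m)%N by move: pm; rewrite mem_primes => /and3P[].
by rewrite totientE // (big_rem p) //= dvdn_mulr ?dvdn_mulr.
Qed.

Lemma prime_dvd_totient {q m : nat} : prime q -> (0 < m)%N -> (q %| totient m)%N ->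
  exists2 p, p \in primes m & (q %| p.-1)%N || (p == q) && (p ^ 2 %| m)%N.
Proof.
move=> q_pr m_gt0; rewrite totientE // Euclid_dvd_prod // big_has => /hasP[p pm].
have p_pr : prime p by move: pm; rewrite mem_primes => /and3P[].
rewrite (Euclid_dvdM _ _ q_pr) (Euclid_dvdX _ _ q_pr) (dvdn_prime2 q_pr p_pr).
case/orP=> [qp1 | /andP[/eqP def_q log_gt1]]; exists p; rewrite ?qp1 //.
by subst q; rewrite eqxx pfactor_dvdn // -ltn_predRL log_gt1 orbT.
Qed.

Section SmoothChain.
Context {R : realType} (x y : R).
Hypothesis le_yx : (y <= x)%R.

Definition large_prime_sq_dvd (m : nat) : bool :=
  has (fun p => (y < p%:R)%R && (p ^ 2 %| m)%N) (primes m).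

Lemma Pset_small_prime j p : prime p -> (p%:R <= y)%R -> Pset x y j p.
Proof.
elim: j p => [|j IHj] p p_pr le_py /=; first by rewrite p_pr le_py.
rewrite p_pr (le_trans le_py le_yx) /=; apply/allP => q.
rewrite mem_primes => /and3P[q_pr p1_gt0 qp1]; apply: IHj => //.
apply: le_trans le_py; rewrite ler_nat.
exact: leq_trans (dvdn_leq p1_gt0 qp1) (leq_pred p).
Qed.

Lemma all_Pset_totient j m : (0 < m)%N -> (m%:R <= x)%R -> ~~ large_prime_sq_dvd m ->
  all (Pset x y j.+1) (primes m) = all (Pset x y j) (primes (totient m)).
Proof.
move=> m_gt0 le_mx no_sq; apply/allP/allP => [Pm q | Pphi p pm].
- rewrite mem_primes => /and3P[q_pr _ q_phi].
  have [p pm p_cases] := prime_dvd_totient q_pr m_gt0 q_phi.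
  have p_pr : prime p by move: pm; rewrite mem_primes => /and3P[].
  case/orP: p_cases => [qp1 | /andP[/eqP <- p2m]].
  + have /and3P[_ _ /allP] := Pm p pm; apply.
    by rewrite mem_primes q_pr qp1 -subn1 subn_gt0 prime_gt1.
  + apply: Pset_small_prime => //; rewrite leNgt; apply: contra no_sq => lt_yp.
    by apply/hasP; exists p => //; rewrite lt_yp.
- move: (pm); rewrite mem_primes => /and3P[p_pr _ pdm].
  have le_px : (p%:R <= x)%R by apply: le_trans le_mx; rewrite ler_nat dvdn_leq.
  rewrite /= p_pr le_px /=.
  apply/allP => q; rewrite mem_primes => /and3P[q_pr _ qp1]; apply: Pphi.
  by rewrite mem_primes q_pr totient_gt0 m_gt0 (dvdn_trans qp1 (dvdn_pred_totient pm)).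
Qed.

Lemma all_Pset_phi_iter j m : (0 < m)%N -> (m%:R <= x)%R ->
    (forall i, (i < j)%N -> ~~ large_prime_sq_dvd (phi_iter i m)) ->
  all (Pset x y j) (primes m) = all (fun p => (p%:R <= y)%R) (primes (phi_iter j m)).
Proof.
elim: j m => [|j IHj] m m_gt0 le_mx no_sq.
  by apply: eq_in_all => p; rewrite mem_primes /= => /and3P[->].
rewrite (all_Pset_totient j m m_gt0 le_mx (no_sq 0%N isT)) /phi_iter iterSr IHj //.
- by rewrite totient_gt0.
- by apply: le_trans le_mx; rewrite ler_nat leq_totient.
- by move=> i lt_ij; have := no_sq i.+1 lt_ij; rewrite /phi_iter iterSr.
Qed.

End SmoothChain.

Section CountLe.
Context {R : realType} (x : R).

Lemma count_leE (P : pred nat) :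
  count_le x P = (\sum_(n < (Num.truncn x).+1) [&& (0 < n)%N, (n%:R <= x)%R & P n])%N.
Proof.
by rewrite /count_le -sum1_card big_mkcond; apply: eq_bigr => n _; rewrite inE; case: ifP.
Qed.

Lemma count_le_leq_add_sum {P Q : pred nat} {k} {E : nat -> pred nat} :
    (forall n, (0 < n)%N -> (n%:R <= x)%R -> (forall i, (i < k)%N -> ~~ E i n) ->
      P n = Q n) ->
  (count_le x P <= count_le x Q + \sum_(i < k) count_le x (E i))%N.
Proof.
move=> eq_off_E; rewrite (eq_bigr _ (fun (i : 'I_k) _ => count_leE (E i))) !count_leE.
rewrite exchange_big -big_split /=.
apply: leq_sum => n _; case n_gt0: (0 < n)%N; case le_nx: (n%:R <= x)%R => //=.
case: (pickP (fun i : 'I_k => E i n)) => [i Ein | no_E].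
  by rewrite (bigD1 i) //= Ein addnCA; case: (P n); rewrite ?leq_addr.
rewrite (eq_off_E n n_gt0 le_nx) ?leq_addr // => i lt_ik.
by rewrite (no_E (Ordinal lt_ik)).
Qed.

Lemma count_le_dist {P Q : pred nat} {k} {E : nat -> pred nat} :
    (forall n, (0 < n)%N -> (n%:R <= x)%R -> (forall i, (i < k)%N -> ~~ E i n) ->
      P n = Q n) ->
  (`| (count_le x P)%:Z - (count_le x Q)%:Z | <= (\sum_(i < k) count_le x (E i))%:Z)%R.
Proof.
move=> eq_off_E; have le_PQ := count_le_leq_add_sum eq_off_E.
have le_QP : (count_le x Q <= count_le x P + \sum_(i < k) count_le x (E i))%N.
  by apply: count_le_leq_add_sum => n n_gt0 le_nx no_E; rewrite eq_off_E.
lia.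
Qed.

End CountLe.

Theorem lemma4p3 (R : realType) (x y : R) (k : nat) :
  (2%:R <= y)%R -> (y <= x)%R ->
  (`| (Psi x (Pset x y k))%:Z - (PhiK k x y)%:Z | <= (\sum_(i < k) S_card i x y)%:Z)%R.
Proof.
move=> _ le_yx.
apply: (count_le_dist x (E := fun i n => large_prime_sq_dvd y (phi_iter i n))).
exact: all_Pset_phi_iter.
Qed.
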